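(* $m(K_{2,2,3})=m(K_{2,3,3})=3$.
   Context: All graphs are finite, simple and undirected. A list assignment $L$ for a graph $G$ assigns to each vertex $v$ a set $L(v)$ of colors; an $L$-coloring is a proper vertex coloring $c$ of $G$ with $c(v)\in L(v)$ for every vertex $v$. A $k$-list assignment is a list assignment with $|L(v)|=k$ for all $v$. $G$ is uniquely $k$-list colorable (U$k$LC) if there exists a $k$-list assignment $L$ such that $G$ has exactly one $L$-coloring. $G$ has property $M(k)$ if it is not U$k$LC, i.e. for every $k$-list assignment $L$, $G$ has either no $L$-coloring or at least two $L$-colorings. The m-number $m(G)$ is the least integer $k\ge 1$ such that $G$ has property $M(k)$. $K_{n_1,\dots,n_r}$ denotes the complete $r$-partite graph with parts of sizes $n_1,\dots,n_r$. *)

From mathcomp Require Import all_boot.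
Set Implicit Arguments. Unset Strict Implicit. Unset Printing Implicit Defensive.

(* A finite simple graph: vertex type T : finType, adjacency e : rel T
   (symmetric, irreflexive).  Colors are natural numbers. *)

Definition k_list_assignment (T : finType) (k : nat) (L : T -> seq nat) : Prop :=
  forall v, uniq (L v) /\ size (L v) = k.

Definition L_coloring (T : finType) (e : rel T) (L : T -> seq nat) (c : T -> nat) : Prop :=
  (forall v, c v \in L v) /\ (forall x y, e x y -> c x <> c y).

Definition UkLC (T : finType) (e : rel T) (k : nat) : Prop :=
  exists L : T -> seq nat, k_list_assignment k L /\
    exists c, L_coloring e L c /\
      forall c', L_coloring e L c' -> forall v, c' v = c v.

Definition property_M (T : finType) (e : rel T) (k : nat) : Prop := ~ UkLC e k.

Definition is_m_number (T : finType) (e : rel T) (m : nat) : Prop :=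
  1 <= m /\ property_M e m /\ (forall k, 1 <= k < m -> ~ property_M e k).

(* Complete multipartite graph K_{n_1,...,n_r} with s = [:: n_1; ...; n_r]:
   vertices are pairs (part i, index j < n_i); adjacent iff in different parts. *)
Definition cmp_vertex (s : seq nat) : finType :=
  {i : 'I_(size s) & 'I_(nth 0 s i)}.

Definition cmp_edge (s : seq nat) : rel (cmp_vertex s) :=
  fun x y => tag x != tag y.

From mathcomp Require Import all_boot.
Set Implicit Arguments. Unset Strict Implicit. Unset Printing Implicit Defensive.

(* Let c be the unique L-coloring for a 3-list assignment L of a complete
   multipartite graph.  Every color of L(v) other than c(v) is used by c on a
   neighbour of v, otherwise v alone could be recolored.  If c is injective,
   this gives a map f sending each vertex to a neighbour whose color lies in its
   list, and recoloring an f-invariant set on which f is injective by c o f gives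
   a second L-coloring.  Otherwise the color classes of c, together with the
   classes carrying the two other colors of each vertex, form a finite pattern,
   and a verified search shows that for K_{2,2,3} and K_{2,3,3} every such
   pattern admits a second coloring.  Explicit lists with unique colorings show
   that both graphs are uniquely 1- and 2-list colorable. *)

Lemma uniq_exists_neq (T : eqType) (s : seq T) (a : T) :
  uniq s -> 1 < size s -> exists2 g, g \in s & g != a.
Proof.
case: s => [|x [|y s]] //= /andP[xNys _] _.
have xy : x != y by apply: contraNneq xNys => ->; exact: mem_head.
case: (x =P a) => [xa|/eqP xNa]; last by exists x; rewrite ?mem_head.
by exists y; rewrite ?inE ?eqxx ?orbT // -xa eq_sym.
Qed.

Lemma exists_invariant_set_injective (T : finType) (f : T -> T) (x : T) :
  exists S : {set T}, [/\ S != set0, f @: S \subset S & {in S &, injective f}].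
Proof.
pose closed (S : {set T}) := (S != set0) && (f @: S \subset S).
have closedT : closed setT by rewrite /closed subsetT andbT; apply/set0Pn; exists x.
case: (arg_minnP (fun S : {set T} => #|S|) closedT) => S /andP[S0 fS] Smin.
exists S; split=> //; apply/imset_injP; rewrite eqn_leq leq_imset_card /=.
apply: Smin; rewrite /closed imsetS // andbT.
by case/set0Pn: S0 => w Sw; apply/set0Pn; exists (f w); exact: imset_f.
Qed.

Section UniqueListColoring.
Variables (T : finType) (e : rel T).
Hypotheses (e_sym : symmetric e) (e_irr : irreflexive e).

Lemma UkLC_1 : UkLC e 1.
Proof.
exists (fun v => [:: val (enum_rank v)]); split=> [v //|].
exists (fun v => val (enum_rank v)); split.
  split=> [v|x y exy /val_inj/enum_rank_inj xy]; first exact: mem_head.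
  by rewrite xy e_irr in exy.
by move=> c' [c'L _] v; apply/eqP; rewrite -mem_seq1 c'L.
Qed.

Lemma injective_L_coloring (L : T -> seq nat) (c : T -> nat) :
  injective c -> (forall v, c v \in L v) -> L_coloring e L c.
Proof. by move=> c_inj cL; split=> // x y exy /c_inj xy; rewrite xy e_irr in exy. Qed.

Variables (L : T -> seq nat) (c : T -> nat).
Hypothesis cL : L_coloring e L c.
Hypothesis c_unique : forall c', L_coloring e L c' -> forall v, c' v = c v.

Lemma unique_coloring_blocked v g :
  g \in L v -> g != c v -> exists2 u, e v u & c u = g.
Proof.
move=> gL gNc; suff /existsP[u /andP[evu /eqP]] : [exists u, e v u && (c u == g)].
  by exists u.
apply: contraT; rewrite negb_exists => /forallP free.
pose c1 w := if w == v then g else c w.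
suff /(c_unique)/(_ v) : L_coloring e L c1 by rewrite /c1 eqxx => gc; rewrite gc eqxx in gNc.
case: cL => cL' c_proper; split=> [w|x y]; first by rewrite /c1; case: eqP => [->|].
rewrite /c1; case: (x =P v) => [->|_]; case: (y =P v) => [->|_].
- by rewrite e_irr.
- by move=> evy gcy; move: (free y); rewrite evy gcy eqxx.
- by rewrite e_sym => evx cxg; move: (free x); rewrite evx cxg eqxx.
- exact: c_proper.
Qed.

(* The vertex x only witnesses that T is nonempty; the empty graph is UkLC. *)
Lemma unique_coloring_not_injective k (x : T) :
  1 < k -> k_list_assignment k L -> ~ injective c.
Proof.
move=> k_gt1 kL c_inj.
have nbr v : exists u, e v u && (c u \in L v).
  have [Lu Ls] := kL v; rewrite -Ls in k_gt1.
  have [g gL gNc] := uniq_exists_neq (c v) Lu k_gt1.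
  by have [u evu cug] := unique_coloring_blocked gL gNc; exists u; rewrite evu cug.
pose f v := xchoose (nbr v).
have e_f v : e v (f v) by case/andP: (xchooseP (nbr v)).
have cf_L v : c (f v) \in L v by case/andP: (xchooseP (nbr v)).
have [S [S0 fS f_inj]] := exists_invariant_set_injective f x.
pose c2 w := if w \in S then c (f w) else c w.
have c2_inj : injective c2.
  have fS' w : w \in S -> f w \in S by move=> Sw; apply: (subsetP fS); exact: imset_f.
  move=> y z; rewrite /c2; case: ifP => Sy; case: ifP => Sz /c_inj yz.
  - exact: f_inj.
  - by move: Sz; rewrite -yz fS'.
  - by move: Sy; rewrite yz fS'.
  - exact: yz.
have /c_unique c2c : L_coloring e L c2.
  by apply: injective_L_coloring => // w; rewrite /c2; case: ifP => _; [exact: cf_L | case: cL].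
case/set0Pn: S0 => w Sw; move: (c2c w) (e_f w); rewrite /c2 Sw => /c_inj ->.
by rewrite e_irr.
Qed.

End UniqueListColoring.

(* Vertices are the indices 0 .. size parts - 1, parts`_i being the part of i.
   A coloring is encoded by naming each color class by its least vertex: cls`_i
   is the representative of the class of i, and an alternative color of a vertex
   is a representative lying in another part.  The checks are evaluated by
   vm_compute, which is call-by-value: short circuits are written with [if]. *)
Section PatternSearch.
Variable parts : seq nat.
Local Notation nv := (size parts).
Local Notation part i := (nth 0 parts i).

Definition proper_seq (col : seq nat) : bool :=
  all (fun u => all (fun v => (part u == part v) || (nth 0 col u != nth 0 col v))
    (iota 0 nv)) (iota 0 nv).

Definition options (cls : seq nat) (alts : seq (option (nat * nat))) v : seq nat :=
  nth 0 cls v :: (if nth None alts v is Some (x, y) then [:: x; y] else [::]).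

Definition is_recoloring cls alts (col : seq nat) : bool :=
  [&& all (fun v => nth 0 col v \in options cls alts v) (iota 0 nv), proper_seq col &
      has (fun v => nth 0 col v != nth 0 cls v) (iota 0 nv)].

Fixpoint find_map A (s : seq nat) (F : nat -> option A) : option A :=
  if s is x :: s' then (if F x is Some r then Some r else find_map s' F) else None.

Fixpoint extend_recoloring (todo : seq (nat * nat * seq nat)) (fixed : seq (nat * nat))
    (changed : bool) : option (seq nat) :=
  match todo with
  | [::] => if changed then Some (rev (unzip2 fixed)) else None
  | (p, old, opts) :: todo' => find_map opts (fun x =>
      if has (fun pc => if eqn pc.2 x then ~~ eqn pc.1 p else false) fixed then None
      else extend_recoloring todo' ((p, x) :: fixed) (if changed then true else x != old))
  end.

(* An untrusted backtracking search; only its answer checked by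
   [is_recoloring] is relied upon. *)
Definition found_recoloring cls alts : bool :=
  if extend_recoloring [seq (part v, nth 0 cls v, options cls alts v) | v <- iota 0 nv] [::] false
    is Some col then is_recoloring cls alts col else false.

Definition alt_choices (cls : seq nat) k : seq (nat * nat) :=
  let reps := [seq u <- iota 0 nv | (part u != part k) && (nth 0 cls u == u)] in
  [seq xy <- [seq (x, y) | x <- reps, y <- reps] | xy.1 < xy.2].

Fixpoint search cls (todo : seq nat) alts : bool :=
  if found_recoloring cls alts then true
  else if todo is k :: todo'
  then all (fun xy => search cls todo' (set_nth None alts k (Some xy))) (alt_choices cls k)
  else false.

Definition class_size (cls : seq nat) v := count_mem (nth 0 cls v) cls.
Definition search_order cls : seq nat :=
  sort (fun a b => class_size cls a <= class_size cls b) (rev (iota 0 nv)).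

Definition all_seqs (ls : seq (seq nat)) : seq (seq nat) :=
  foldr (fun l acc => flatten [seq [seq x :: r | r <- acc] | x <- l]) [:: [::]] ls.

Definition rep_candidates i : seq nat := [seq u <- iota 0 i.+1 | part u == part i].
Definition closed_classes (cls : seq nat) : bool :=
  all (fun i => nth 0 cls (nth 0 cls i) == nth 0 cls i) (iota 0 nv).

(* cls = iota 0 nv is the pattern of an injective coloring. *)
Definition no_unique_3coloring_check : bool :=
  all (fun cls => if closed_classes cls && (cls != iota 0 nv)
                  then search cls (search_order cls) (nseq nv None) else true)
      (all_seqs (map rep_candidates (iota 0 nv))).

Definition unique_2coloring_check (LL : seq (seq nat)) (col : seq nat) : bool :=
  [&& size LL == nv, all (fun l => uniq l && (size l == 2)) LL,
      all (fun i => nth 0 col i \in nth [::] LL i) (iota 0 nv), proper_seq col &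
      all (fun col' => proper_seq col' ==> (col' == col)) (all_seqs LL)].

Lemma mem_all_seqs (ls : seq (seq nat)) (s : seq nat) :
  size s = size ls -> (forall i, i < size ls -> nth 0 s i \in nth [::] ls i) ->
  s \in all_seqs ls.
Proof.
elim: ls s => [|l ls IH] [|x s] //= [sz] s_ls.
apply/flattenP; exists [seq x :: r | r <- all_seqs ls]; first exact: map_f (s_ls 0 _).
by apply: map_f; apply: IH => // i; exact: s_ls i.+1.
Qed.

Lemma options_mono cls alts alts' v :
  (forall xy, nth None alts v = Some xy -> nth None alts' v = Some xy) ->
  {subset options cls alts v <= options cls alts' v}.
Proof.
rewrite /options; case: (nth None alts v) => [[x y]|] ext; first by rewrite (ext _ erefl).
by move=> g; rewrite inE => /eqP ->; exact: mem_head.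
Qed.

Definition total_alts (alt : nat -> nat * nat) := [seq Some (alt v) | v <- iota 0 nv].

Lemma is_recoloring_total cls alts (alt : nat -> nat * nat) col :
  is_recoloring cls alts col ->
  (forall v xy, v < nv -> nth None alts v = Some xy -> alt v = xy) ->
  is_recoloring cls (total_alts alt) col.
Proof.
case/and3P=> /allP col_opts proper changed alts_alt.
rewrite /is_recoloring proper changed !andbT; apply/allP => v v_nv.
apply: options_mono (col_opts v v_nv) => xy; move: v_nv; rewrite mem_iota => v_nv.
by move/(alts_alt _ _ v_nv) <-; rewrite /total_alts (nth_map 0) ?size_iota // nth_iota.
Qed.

Lemma found_recoloringP cls alts :
  found_recoloring cls alts -> exists col, is_recoloring cls alts col.
Proof. by rewrite /found_recoloring; case: extend_recoloring => // col; exists col. Qed.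

Lemma search_sound cls todo alts (alt : nat -> nat * nat) :
  search cls todo alts ->
  (forall v xy, v < nv -> nth None alts v = Some xy -> alt v = xy) ->
  (forall k, k \in todo -> alt k \in alt_choices cls k) ->
  exists col, is_recoloring cls (total_alts alt) col.
Proof.
elim: todo alts => [|k todo IH] alts /=;
  case: ifP => [/found_recoloringP[col rec] _ alts_alt _|_ //].
1-2: by exists col; exact: is_recoloring_total rec alts_alt.
move=> /allP search_k alts_alt alt_choice.
apply: (IH _ (search_k _ (alt_choice _ (mem_head _ _)))) => [v xy v_nv|j j_todo].
  by rewrite nth_set_nth /=; case: eqP => [-> [] //|_]; exact: alts_alt.
by apply: alt_choice; rewrite inE j_todo orbT.
Qed.

Lemma mem_alt_choices cls k x y :
  x < nv -> y < nv -> part x != part k -> part y != part k ->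
  nth 0 cls x = x -> nth 0 cls y = y -> x < y -> (x, y) \in alt_choices cls k.
Proof.
move=> x_nv y_nv xk yk clsx clsy xy.
by rewrite mem_filter xy; apply: allpairs_f; rewrite mem_filter mem_iota ?xk ?yk ?clsx ?clsy eqxx.
Qed.

Lemma no_unique_3coloring_check_sound cls (alt : nat -> nat * nat) :
  no_unique_3coloring_check -> size cls = nv ->
  (forall i, i < nv -> nth 0 cls i \in rep_candidates i) ->
  closed_classes cls -> cls != iota 0 nv ->
  (forall k, k < nv -> alt k \in alt_choices cls k) ->
  exists col, is_recoloring cls (total_alts alt) col.
Proof.
move=> /allP check sz cand closed nontriv alt_choice.
have : cls \in all_seqs (map rep_candidates (iota 0 nv)).
  apply: mem_all_seqs; rewrite size_map size_iota // => i i_nv.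
  by rewrite (nth_map 0) ?size_iota // nth_iota // cand.
move=> /check; rewrite closed nontriv /= => /search_sound; apply.
  by move=> v xy _; rewrite nth_nseq; case: ifP.
by move=> k; rewrite mem_sort mem_rev mem_iota => /andP[_]; exact: alt_choice.
Qed.

End PatternSearch.

Section CompleteMultipartite.
Variables (T : finType) (e : rel T) (pf : T -> nat).
Hypothesis e_pf : forall x y, e x y = (pf x != pf y).
Variables (vl : seq T) (x0 : T).
Hypotheses (vl_uniq : uniq vl) (vl_all : forall v, v \in vl).

Local Notation n := (size vl).
Local Notation parts := (map pf vl).
Local Notation vtx i := (nth x0 vl i).
Local Notation idx v := (index v vl).

Lemma e_sym : symmetric e. Proof. by move=> x y; rewrite !e_pf eq_sym. Qed.
Lemma e_irr : irreflexive e. Proof. by move=> x; rewrite e_pf eqxx. Qed.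

Lemma idx_lt v : idx v < n. Proof. by rewrite index_mem. Qed.
Lemma vtx_idx v : vtx (idx v) = v. Proof. exact: nth_index. Qed.
Lemma idx_vtx i : i < n -> idx (vtx i) = i. Proof. by move=> i_n; rewrite index_uniq. Qed.
Lemma part_vtx i : i < n -> nth 0 parts i = pf (vtx i). Proof. by move=> i_n; rewrite (nth_map x0). Qed.
Lemma part_idx v : nth 0 parts (idx v) = pf v. Proof. by rewrite part_vtx ?idx_lt // vtx_idx. Qed.

Lemma nth_map_vtx (col : T -> nat) i :
  i < n -> nth 0 [seq col (vtx j) | j <- iota 0 n] i = col (vtx i).
Proof. by move=> i_n; rewrite (nth_map 0) ?size_iota // nth_iota. Qed.

Lemma proper_seq_map (col : T -> nat) :
  (forall x y, e x y -> col x <> col y) -> proper_seq parts [seq col (vtx i) | i <- iota 0 n].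
Proof.
move=> col_proper; apply/allP => u; rewrite size_map mem_iota => u_n.
apply/allP => v; rewrite mem_iota => v_n; rewrite !nth_map_vtx // !part_vtx //.
by case: eqP => //= /eqP puv; apply/eqP; apply: col_proper; rewrite e_pf.
Qed.

Lemma proper_seq_idx (s : seq nat) x y :
  proper_seq parts s -> e x y -> nth 0 s (idx x) != nth 0 s (idx y).
Proof.
move=> proper; rewrite e_pf -!part_idx => xy.
have idx_iota v : idx v \in iota 0 (size parts) by rewrite mem_iota size_map idx_lt.
by move/allP: (allP proper _ (idx_iota x)) => /(_ _ (idx_iota y)); rewrite (negbTE xy).
Qed.

Lemma UkLC_2_of_check LL C : unique_2coloring_check parts LL C -> UkLC e 2.
Proof.
case/and5P; rewrite size_map => /eqP LLn /allP LL2 /allP CL C_proper /allP C_unique.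
exists (fun v => nth [::] LL (idx v)); split.
  move=> v; have idx_LL : idx v < size LL by rewrite LLn idx_lt.
  by have /andP[-> /eqP] := LL2 _ (mem_nth [::] idx_LL).
exists (fun v => nth 0 C (idx v)); split.
  split=> [v|x y /(proper_seq_idx C_proper) /eqP //].
  by apply: CL; rewrite mem_iota idx_lt.
move=> c' [c'L c'_proper] v.
have s_LL : [seq c' (vtx i) | i <- iota 0 n] \in all_seqs LL.
  apply: mem_all_seqs => [|i]; first by rewrite size_map size_iota LLn.
  by rewrite LLn => i_n; rewrite nth_map_vtx //; have := c'L (vtx i); rewrite idx_vtx.
have /eqP <- := implyP (C_unique _ s_LL) (proper_seq_map c'_proper).
by rewrite nth_map_vtx ?idx_lt // vtx_idx.
Qed.

Section UniqueThreeColoring.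
Variables (L : T -> seq nat) (c : T -> nat).
Hypotheses (L3 : k_list_assignment 3 L) (cL : L_coloring e L c).
Hypothesis c_unique : forall c', L_coloring e L c' -> forall v, c' v = c v.

Local Notation col i := (c (vtx i)).
Local Notation part i := (nth 0 parts i).

Definition first_of_color g := find (fun u => col u == g) (iota 0 n).
Local Notation rep i := (first_of_color (col i)).

Lemma first_of_color_spec g i :
  i < n -> col i = g -> [/\ first_of_color g < n, col (first_of_color g) = g & first_of_color g <= i].
Proof.
move=> i_n coli.
have has_g : has (fun u => col u == g) (iota 0 n) by apply/hasP; exists i; rewrite ?mem_iota ?coli.
have lt_n : first_of_color g < n by rewrite -[X in _ < X](size_iota 0) -has_find.
split=> //; first by move: (nth_find 0 has_g); rewrite nth_iota // => /eqP.
by rewrite leqNgt; apply/negP => /(before_find 0); rewrite nth_iota // coli eqxx.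
Qed.

Lemma rep_rep i : i < n -> rep (rep i) = rep i.
Proof. by move=> i_n; have [_ -> _] := first_of_color_spec i_n erefl. Qed.

Lemma same_color_same_part i j : i < n -> j < n -> col i = col j -> part i = part j.
Proof.
move=> i_n j_n cij; apply/eqP; apply: contraT; rewrite !part_vtx // => pij.
by case: cL => _ /(_ (vtx i) (vtx j)); rewrite e_pf => /(_ pij).
Qed.

Definition others k := [seq g <- L (vtx k) | g != col k].

Lemma others_spec k : uniq (others k) /\ size (others k) = 2.
Proof.
have [L_uniq L_size] := L3 (vtx k); split; first exact: filter_uniq.
have := count_predC (pred1 (col k)) (L (vtx k)).
rewrite L_size (count_uniq_mem _ L_uniq) size_filter.
by case: cL => -> _ [].
Qed.

Lemma first_of_color_other k g : k < n -> g \in others k ->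
  [/\ first_of_color g < n, col (first_of_color g) = g, part (first_of_color g) != part k &
      rep (first_of_color g) = first_of_color g].
Proof.
rewrite mem_filter => k_n /andP[gNc gL].
have [u evu cug] := unique_coloring_blocked e_sym e_irr cL c_unique gL gNc.
have cu : col (idx u) = g by rewrite vtx_idx.
have [lt_n cg _] := first_of_color_spec (idx_lt u) cu.
rewrite cg; split=> //.
by rewrite (same_color_same_part lt_n (idx_lt u)) ?cg ?cu // part_idx part_vtx // eq_sym -e_pf.
Qed.

(* Sorted because [alt_choices] only lists pairs x < y. *)
Definition alt k :=
  let a := first_of_color (nth 0 (others k) 0) in
  let b := first_of_color (nth 0 (others k) 1) in (minn a b, maxn a b).

Lemma mem_nth_others k i : i < 2 -> nth 0 (others k) i \in others k.
Proof. by have [_ <-] := others_spec k; exact: mem_nth. Qed.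

Lemma mem_alt k x :
  x \in [:: (alt k).1; (alt k).2] -> exists2 g, g \in others k & x = first_of_color g.
Proof.
rewrite /alt /minn /maxn /=; case: ltnP => _; rewrite !inE => /orP[] /eqP ->.
all: by [exists (nth 0 (others k) 0); rewrite ?mem_nth_others
        | exists (nth 0 (others k) 1); rewrite ?mem_nth_others].
Qed.

Lemma alt_lt k : k < n -> (alt k).1 < (alt k).2.
Proof.
move=> k_n; have [o_uniq sz] := others_spec k.
have [_ c0 _ _] := first_of_color_other k_n (mem_nth_others k (isT : 0 < 2)).
have [_ c1 _ _] := first_of_color_other k_n (mem_nth_others k (isT : 1 < 2)).
have g01 : nth 0 (others k) 0 != nth 0 (others k) 1 by rewrite nth_uniq ?sz.
rewrite /alt /minn /maxn /=.
set a := first_of_color _ in c0 *; set b := first_of_color _ in c1 *.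
have ab : a != b by apply: contra_neq g01 => /(congr1 (fun i => col i)); rewrite c0 c1.
by case: (ltngtP a b) ab.
Qed.

Definition classes := [seq rep i | i <- iota 0 n].

Lemma nth_classes i : i < n -> nth 0 classes i = rep i.
Proof. by move=> i_n; rewrite (nth_map 0) ?size_iota // nth_iota. Qed.

Lemma classes_nontrivial : classes != iota 0 n.
Proof.
apply/eqP => cls_id.
apply: (unique_coloring_not_injective e_sym e_irr cL c_unique x0 (isT : 1 < 3) L3) => x y cxy.
have : rep (idx x) = rep (idx y) by rewrite !vtx_idx cxy.
rewrite -!nth_classes ?idx_lt // cls_id !nth_iota ?idx_lt // => /(congr1 (nth x0 vl)).
by rewrite !vtx_idx.
Qed.

Lemma classes_rep_candidates i : i < n -> nth 0 classes i \in rep_candidates parts i.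
Proof.
move=> i_n; have [rep_n rep_c rep_le] := first_of_color_spec i_n erefl.
rewrite nth_classes // mem_filter mem_iota ltnS rep_le /=.
by rewrite (same_color_same_part rep_n i_n rep_c) eqxx.
Qed.

Lemma closed_classes_classes : closed_classes parts classes.
Proof.
apply/allP => i; rewrite size_map mem_iota => /= i_n.
by have [rep_n _ _] := first_of_color_spec i_n erefl; rewrite !nth_classes // rep_rep.
Qed.

Lemma alt_choices_alt k : k < n -> alt k \in alt_choices parts classes k.
Proof.
move=> k_n; rewrite -[alt k]/((alt k).1, (alt k).2).
have alt_rep i : i \in [:: (alt k).1; (alt k).2] ->
    [/\ i < n, part i != part k & nth 0 classes i = i].
  case/mem_alt => g /(first_of_color_other k_n) [g_n _ gk g_rep] ->.
  by rewrite nth_classes.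
have [a_n ak a_rep] := alt_rep _ (mem_head _ _).
have [b_n bk b_rep] := alt_rep (alt k).2 (mem_last _ [:: _]).
by apply: mem_alt_choices; rewrite ?size_map ?alt_lt.
Qed.

Section Recoloring.
Variable col' : seq nat.
Hypothesis col'_rec : is_recoloring parts classes (total_alts parts alt) col'.

Lemma recoloring_entry i :
  i < n -> rep (nth 0 col' i) = nth 0 col' i /\ col (nth 0 col' i) \in L (vtx i).
Proof.
move=> i_n; case/and3P: col'_rec => /allP/(_ i) + _ _.
rewrite mem_iota size_map i_n /options /total_alts (nth_map 0) ?size_map ?size_iota //.
rewrite nth_iota // inE => /(_ isT) /orP[/eqP -> | ].
  have [_ rep_c _] := first_of_color_spec i_n erefl.
  by rewrite nth_classes // rep_rep // rep_c; case: cL.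
case/mem_alt => g g_oth ->; have [_ cg _ g_rep] := first_of_color_other i_n g_oth.
by move: g_oth; rewrite g_rep cg mem_filter => /andP[].
Qed.

Lemma recoloring_coloring : L_coloring e L (fun w => col (nth 0 col' (idx w))).
Proof.
split=> [w | x y exy]; first by have [_] := recoloring_entry (idx_lt w); rewrite vtx_idx.
have [rx _] := recoloring_entry (idx_lt x); have [ry _] := recoloring_entry (idx_lt y).
case/and3P: col'_rec => _ proper _ cxy.
by have := proper_seq_idx proper exy; rewrite -rx -ry cxy eqxx.
Qed.

End Recoloring.

Lemma no_recoloring col' : ~~ is_recoloring parts classes (total_alts parts alt) col'.
Proof.
apply/negP => rec; case/and3P: (rec) => _ _ /hasP[v]; rewrite size_map mem_iota /= => v_n.
have := c_unique (recoloring_coloring rec) (vtx v); rewrite idx_vtx // => cv.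
have [rv _] := recoloring_entry rec v_n.
by rewrite nth_classes // -rv cv eqxx.
Qed.

Lemma no_unique_3coloring_checkF : no_unique_3coloring_check parts = false.
Proof.
apply/negP => check.
have := no_unique_3coloring_check_sound (cls := classes) (alt := alt) check; rewrite size_map.
have size_classes : size classes = n by rewrite size_map size_iota.
case/(_ size_classes classes_rep_candidates closed_classes_classes classes_nontrivial alt_choices_alt).
by move=> col'; rewrite (negbTE (no_recoloring col')).
Qed.

End UniqueThreeColoring.

Lemma no_unique_3coloring_of_check : no_unique_3coloring_check parts -> property_M e 3.
Proof.
move=> check [L [L3 [c [cL c_unique]]]].
by rewrite (no_unique_3coloring_checkF L3 cL c_unique) in check.
Qed.

Lemma is_m_number_3_of_checks LL C :
  unique_2coloring_check parts LL C -> no_unique_3coloring_check parts -> is_m_number e 3.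
Proof.
move=> check2 check3; split=> //; split; first exact: no_unique_3coloring_of_check.
move=> [|[|[|//]]] //= _ []; [exact: UkLC_1 e_irr | exact: UkLC_2_of_check check2].
Qed.

End CompleteMultipartite.

Definition cmp_parts (s : seq nat) : seq nat :=
  flatten [seq nseq (nth 0 s i) i | i <- iota 0 (size s)].

Lemma cmp_parts_enum s : [seq val (tag v) | v <- enum (cmp_vertex s)] = cmp_parts s.
Proof.
rewrite /cmp_parts -val_enum_ord -map_comp enumT unlock /= /tag_enum map_flatten -map_comp -enumT.
congr flatten; apply: eq_map => i /=.
rewrite -map_comp -enumT; set t := map _ _.
have /all_pred1P -> : all (pred1 (val i)) t by apply/allP => _ /mapP[x _ ->] /=.
by rewrite size_map size_enum_ord.
Qed.

Lemma cmp_is_m_number_3 s (x0 : cmp_vertex s) LL C :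
  unique_2coloring_check (cmp_parts s) LL C -> no_unique_3coloring_check (cmp_parts s) ->
  is_m_number (@cmp_edge s) 3.
Proof.
have e_pf (x y : cmp_vertex s) : cmp_edge x y = (val (tag x) != val (tag y)).
  by rewrite /cmp_edge -val_eqE.
rewrite -cmp_parts_enum; apply: (is_m_number_3_of_checks e_pf x0) => [|v].
  exact: enum_uniq.
exact: mem_enum.
Qed.

Theorem proposition3p4 :
  is_m_number (@cmp_edge [:: 2; 2; 3]) 3 /\ is_m_number (@cmp_edge [:: 2; 3; 3]) 3.
Proof.
split.
- apply: (@cmp_is_m_number_3 [:: 2; 2; 3] (existT _ ord0 ord0)
    [:: [:: 0; 2]; [:: 1; 3]; [:: 0; 1]; [:: 0; 3]; [:: 0; 1]; [:: 1; 2]; [:: 1; 2]]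
    [:: 2; 3; 0; 0; 1; 1; 1]); by vm_compute.
- apply: (@cmp_is_m_number_3 [:: 2; 3; 3] (existT _ ord0 ord0)
    [:: [:: 0; 2]; [:: 1; 3]; [:: 0; 1]; [:: 0; 3]; [:: 0; 1]; [:: 1; 2]; [:: 1; 2]; [:: 1; 2]]
    [:: 2; 3; 0; 0; 0; 1; 1; 1]); by vm_compute.
Qed.
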